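(* Let $D$ be an integral domain with quotient field $K$ and $n\ge1$. Let $$\mathrm{Int}_K(M_n(D))=\{f\in K[x]\mid f(C)\in M_n(D)\ \forall C\in M_n(D)\},$$ $$\mathrm{Int}_K[M_n(D)]=\{f\in (M_n(K))[x]\mid f(C)\in M_n(D)\ \forall C\in M_n(D)\}.$$ Identify $(M_n(K))[x]$ with $M_n(K[x])$ via the ring isomorphism $\varphi\big(\sum_k (a^{(k)}_{ij})_{i,j}\,x^k\big)=\big(\sum_k a^{(k)}_{ij}x^k\big)_{i,j}$. Then $\varphi(\mathrm{Int}_K[M_n(D)])=M_n(\mathrm{Int}_K(M_n(D)))$.
   Context: For $f=\sum_k A_k x^k\in (M_n(K))[x]$ and $C\in M_n(D)$, $f(C)=\sum_k A_kC^k$ (coefficients written on the left). $\mathrm{Int}_K[M_n(D)]$ is a ring (closed under multiplication) lying between $(M_n(D))[x]$ and $(M_n(K))[x]$. *)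

From HB Require Import structures.
From mathcomp Require Import all_boot all_order all_algebra.
Set Implicit Arguments. Unset Strict Implicit. Unset Printing Implicit Defensive.
Import GRing.Theory.
Local Open Scope ring_scope.

(* D : integral domain, K := {fraction D} its quotient field, D embedded via tofrac.
   Matrices are n x n with n = m.+1 (so n >= 1). *)

Definition inMD (D : idomainType) (m : nat) (C : 'M[{fraction D}]_m.+1) : Prop :=
  exists B : 'M[D]_m.+1, C = map_mx (@tofrac D) B.

Definition evalK (D : idomainType) (m : nat) (f : {poly {fraction D}})
  (C : 'M[{fraction D}]_m.+1) : 'M[{fraction D}]_m.+1 :=
  \sum_(k < size f) (f`_k)%:M * C ^+ k.

Definition evalMK (D : idomainType) (m : nat) (f : {poly 'M[{fraction D}]_m.+1})
  (C : 'M[{fraction D}]_m.+1) : 'M[{fraction D}]_m.+1 :=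
  \sum_(k < size f) f`_k * C ^+ k.

Definition IntK (D : idomainType) (m : nat) (f : {poly {fraction D}}) : Prop :=
  forall C : 'M[D]_m.+1, inMD (evalK f (map_mx (@tofrac D) C)).

Definition IntKM (D : idomainType) (m : nat) (f : {poly 'M[{fraction D}]_m.+1}) : Prop :=
  forall C : 'M[D]_m.+1, inMD (evalMK f (map_mx (@tofrac D) C)).

Definition phi (D : idomainType) (m : nat) (f : {poly 'M[{fraction D}]_m.+1})
  : 'M[{poly {fraction D}}]_m.+1 :=
  \matrix_(i, j) \poly_(k < size f) (f`_k i j).

From HB Require Import structures.
From mathcomp Require Import all_boot all_order all_algebra.
Set Implicit Arguments. Unset Strict Implicit. Unset Printing Implicit Defensive.
Import GRing.Theory.
Local Open Scope ring_scope.

(* Write K for the fraction field of D and g_ab := phi f a b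
   for the entry polynomials of f : M_n(K)[x].  Since f = sum_ab E_ab g_ab,
   where E_ab are the matrix units and g_ab is viewed with scalar
   coefficients, we get f(X) = sum_ab E_ab g_ab(X) for every X : M_n(K).
   - If every g_ab lies in Int_K(M_n(D)), each summand is in M_n(D) for
     X in M_n(D), hence f is in Int_K[M_n(D)]; and phi is onto, since any
     polynomial matrix is phi of its matrix of coefficients.
   - Conversely, for a unit A of M_n(D), conjugation commutes with scalar
     polynomials, so E_rp f(A C A^-1) A = sum_b E_rb A g_pb(C) =: T(A).
     The left side is in M_n(D) when f is in Int_K[M_n(D)], and T is
     additive; since the additive span of the units of M_n(R) contains all
     matrix units (lemma [unit_span_delta]), T(E_lr) = E_rr g_pl(C) is in
     M_n(D), and summing over r gives g_pl(C) in M_n(D). *)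

Lemma unit_1Dsqr0 (R : unitRingType) (x : R) : x * x = 0 -> 1 + x \is a GRing.unit.
Proof.
move=> xx0; apply/unitrP; exists (1 - x).
split.
  by rewrite mulrBl mul1r mulrDr mulr1 xx0 addr0 addrK.
by rewrite mulrDl mul1r mulrBr mulr1 xx0 subr0 subrK.
Qed.

Section UnitSpan.
(* The additive subgroup generated by the units of M_n(R) contains every
   matrix unit; we phrase this for any predicate closed under subtraction. *)
Variables (R : comUnitRingType) (n : nat) (S : 'M[R]_n.+1 -> Prop).
Hypothesis S_sub : forall A B, S A -> S B -> S (A - B).
Hypothesis S_unit : forall A, A \is a GRing.unit -> S A.

Let S_1 : S 1.
Proof. by apply: S_unit; rewrite unitr1. Qed.

Let S_opp A : S A -> S (- A).
Proof. by move=> SA; rewrite -sub0r -(subrr 1); apply: S_sub => //; apply: S_sub. Qed.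

Let S_add A B : S A -> S B -> S (A + B).
Proof. by move=> SA SB; rewrite -[B]opprK; apply: S_sub => //; apply: S_opp. Qed.

Lemma delta_sqr0 i j : i != j -> (delta_mx i j : 'M[R]_n.+1) * delta_mx i j = 0.
Proof. by move=> ij; rewrite -mulmxE mul_delta_mx_cond eq_sym (negbTE ij). Qed.

Lemma transvection_units i j : i != j ->
  (1 + delta_mx i j : 'M[R]_n.+1) \is a GRing.unit /\
  (1 - delta_mx i j : 'M[R]_n.+1) \is a GRing.unit.
Proof.
move=> ij; split; apply: unit_1Dsqr0; first exact: delta_sqr0.
by rewrite mulrN mulNr opprK delta_sqr0.
Qed.

Lemma unit_span_offdiag i j : i != j -> S (delta_mx i j).
Proof.
move=> ij; have [u _] := transvection_units ij.
by rewrite -(addKr 1 (delta_mx i j)) addrC; apply: S_sub => //; apply: S_unit.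
Qed.

(* Every matrix unit lies in S; for a diagonal one use
   E_ll = 1 - E_lt + E_tl - (1 - E_lt)(1 + E_tl) with t != l (or E_ll = 1 if n = 1). *)
Lemma unit_span_delta i j : S (delta_mx i j).
Proof.
have [<- | /unit_span_offdiag //] := eqVneq i j.
case: (pickP (fun t => t != i)) => [t /= ti | all_i].
  have [u1 _] := transvection_units ti.
  have it : i != t by rewrite eq_sym.
  have [_ u2] := transvection_units it.
  pose A : 'M[R]_n.+1 := (1 - delta_mx i t) * (1 + delta_mx t i).
  have uA : A \is a GRing.unit by rewrite /A unitrMl.
  have -> : delta_mx i i = 1 - delta_mx i t + delta_mx t i - A.
    rewrite /A mulrDr mulr1 mulrBl mul1r -mulmxE mul_delta_mx.
    by rewrite addrA subKr.
  apply: S_sub; last exact: S_unit.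
  apply: S_add; last exact: unit_span_offdiag.
  by apply: S_sub => //; apply: unit_span_offdiag.
have -> : delta_mx i i = 1 :> 'M[R]_n.+1.
  apply/matrixP => a b; have /negbFE/eqP -> := all_i a; have /negbFE/eqP -> := all_i b.
  by rewrite !mxE !eqxx.
exact: S_1.
Qed.

End UnitSpan.

Lemma expr_conj (R : unitRingType) (A X : R) k :
  A \is a GRing.unit -> (A * X / A) ^+ k = A * X ^+ k / A.
Proof.
move=> uA; elim: k => [|k IHk]; first by rewrite !expr0 mulr1 divrr.
by rewrite exprS IHk !mulrA divrK // -(mulrA A) -exprS.
Qed.

Section IntegerValued.
Variables (D : idomainType) (m : nat).
Local Notation K := {fraction D}.
Local Notation MK := 'M[K]_m.+1.
Local Notation fm := (map_mx (@tofrac D)).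

Lemma inMD_map (B : 'M[D]_m.+1) : inMD (fm B).
Proof. by exists B. Qed.

Lemma inMD_sub (X Y : MK) : inMD X -> inMD Y -> inMD (X - Y).
Proof. by move=> [A ->] [B ->]; exists (A - B); rewrite rmorphB. Qed.

Lemma inMD_mul (X Y : MK) : inMD X -> inMD Y -> inMD (X * Y).
Proof. by move=> [A ->] [B ->]; exists (A * B); rewrite rmorphM. Qed.

Lemma inMD_sum (I : finType) (F : I -> MK) :
  (forall i, inMD (F i)) -> inMD (\sum_i F i).
Proof.
move=> hF; apply: (big_ind (@inMD D m)) => //; first by exists 0; rewrite rmorph0.
by move=> _ _ [A ->] [B ->]; exists (A + B); rewrite rmorphD.
Qed.

Definition scalar_poly (g : {poly K}) : {poly MK} := map_poly scalar_mx g.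

Lemma evalMK_horner (f : {poly MK}) (X : MK) : evalMK f X = f.[X].
Proof. by rewrite horner_coef. Qed.

Lemma evalK_horner (g : {poly K}) (X : MK) : evalK g X = (scalar_poly g).[X].
Proof.
have scalar_inj : injective (@scalar_mx K m.+1).
  by move=> a b /matrixP /(_ ord0 ord0); rewrite !mxE.
rewrite horner_coef size_map_inj_poly ?raddf0 //.
by apply: eq_bigr => k _; rewrite coef_map.
Qed.

Lemma phi_coef (f : {poly MK}) i j k : (phi f i j)`_k = f`_k i j.
Proof. by rewrite mxE coef_poly; case: ltnP => // h; rewrite nth_default ?mxE. Qed.

Lemma phi_decomp (f : {poly MK}) :
  f = \sum_a \sum_b (delta_mx a b)%:P * scalar_poly (phi f a b).
Proof.
apply/polyP => k; rewrite [RHS]coef_sum [f`_k]matrix_sum_delta.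
apply: eq_bigr => a _; rewrite coef_sum; apply: eq_bigr => b _.
by rewrite coefCM coef_map /= phi_coef -mulmxE scalar_mxC mul_scalar_mx.
Qed.

Lemma horner_decomp (f : {poly MK}) (X : MK) :
  f.[X] = \sum_a \sum_b delta_mx a b * (scalar_poly (phi f a b)).[X].
Proof.
rewrite {1}[f]phi_decomp horner_sum; apply: eq_bigr => a _.
by rewrite horner_sum; apply: eq_bigr => b _; rewrite hornerCM.
Qed.

Lemma horner_scalar_conj (g : {poly K}) (A X : MK) : A \is a GRing.unit ->
  (scalar_poly g).[A * X / A] = A * (scalar_poly g).[X] / A.
Proof.
move=> uA; rewrite !horner_coef mulr_sumr mulr_suml; apply: eq_bigr => k _.
rewrite expr_conj // coef_map /= -!mulmxE !mul_scalar_mx !mulmxE.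
by rewrite -scalerAr -scalerAl.
Qed.

Lemma delta_mul_entries r p (Y : 'I_m.+1 -> 'I_m.+1 -> MK) :
  delta_mx r p * \sum_a \sum_b delta_mx a b * Y a b = \sum_b delta_mx r b * Y p b.
Proof.
rewrite mulr_sumr (bigD1 p) //= [X in _ + X]big1 ?addr0 => [|a ap].
  by rewrite mulr_sumr; apply: eq_bigr => b _; rewrite mulrA -mulmxE mul_delta_mx.
rewrite mulr_sumr big1 // => b _.
by rewrite mulrA -mulmxE mul_delta_mx_cond eq_sym (negbTE ap) !mul0mx.
Qed.

(* T(A) = sum_b E_rb A g_pb(X), the additive map transferring units to
   matrix units. *)
Definition row_transfer (f : {poly MK}) p (X : MK) r (A : MK) : MK :=
  \sum_b delta_mx r b * A * (scalar_poly (phi f p b)).[X].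

Lemma row_transfer_conj f p X r (A : MK) : A \is a GRing.unit ->
  delta_mx r p * f.[A * X / A] * A = row_transfer f p X r A.
Proof.
move=> uA; rewrite horner_decomp delta_mul_entries mulr_suml.
by apply: eq_bigr => b _; rewrite horner_scalar_conj // !mulrA divrK.
Qed.

Lemma row_transfer_sub f p X r (A B : MK) :
  row_transfer f p X r (A - B) = row_transfer f p X r A - row_transfer f p X r B.
Proof. by rewrite -sumrB; apply: eq_bigr => b _; rewrite mulrBr mulrBl. Qed.

Lemma row_transfer_delta f p X r l s :
  row_transfer f p X r (delta_mx l s) = delta_mx r s * (scalar_poly (phi f p l)).[X].
Proof.
rewrite /row_transfer (bigD1 l) //= big1 ?addr0 => [|b bl].
  by rewrite -mulmxE mul_delta_mx.
by rewrite -mulmxE mul_delta_mx_cond (negbTE bl) !mul0mx.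
Qed.

Lemma IntKM_row_transfer f p (C : 'M[D]_m.+1) r (A : 'M[D]_m.+1) :
  IntKM f -> A \is a GRing.unit -> inMD (row_transfer f p (fm C) r (fm A)).
Proof.
move=> hf uA; rewrite -row_transfer_conj ?rmorph_unit //.
have := hf (A * C / A); rewrite evalMK_horner rmorphM rmorphV // rmorphM => hAC.
apply: inMD_mul; last exact: inMD_map.
apply: inMD_mul; last exact: hAC.
by rewrite -(map_delta_mx (@tofrac D)); apply: inMD_map.
Qed.

Lemma IntKM_entries (f : {poly MK}) i j : IntKM f -> IntK m (phi f i j).
Proof.
move=> hf C; rewrite evalK_horner.
rewrite -[_.[_]]mul1r -idmxE mx1_sum_delta mulr_suml; apply: inMD_sum => r.
rewrite -row_transfer_delta -(map_delta_mx (@tofrac D)).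
apply: (unit_span_delta (S := fun B => inMD (row_transfer f i (fm C) r (fm B)))).
  by move=> A B hA hB; rewrite rmorphB row_transfer_sub; apply: inMD_sub.
by move=> A uA; apply: IntKM_row_transfer.
Qed.

Lemma entries_IntKM (f : {poly MK}) : (forall i j, IntK m (phi f i j)) -> IntKM f.
Proof.
move=> h C; rewrite evalMK_horner horner_decomp.
apply: inMD_sum => a; apply: inMD_sum => b; apply: inMD_mul.
  by rewrite -(map_delta_mx (@tofrac D)); apply: inMD_map.
by rewrite -evalK_horner; apply: h.
Qed.

Lemma phi_surjective (M : 'M[{poly K}]_m.+1) : exists f, phi f = M.
Proof.
pose N := (\max_i \max_j size (M i j))%N.
have sizeN i j : (size (M i j) <= N)%N.
  exact: leq_trans (leq_bigmax (F := fun j => size (M i j)) j)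
                   (leq_bigmax (F := fun i => \max_j size (M i j)) i).
exists (\poly_(k < N) \matrix_(i, j) (M i j)`_k).
apply/matrixP => i j; apply/polyP => k; rewrite phi_coef coef_poly.
case: ltnP => kN; first by rewrite mxE.
by rewrite nth_default ?mxE // (leq_trans (sizeN i j) kN).
Qed.

End IntegerValued.

Theorem mainTheorem7 (D : idomainType) (m : nat)
  (M : 'M[{poly {fraction D}}]_m.+1) :
  (exists f : {poly 'M[{fraction D}]_m.+1}, IntKM f /\ phi f = M) <->
  (forall i j, IntK m (M i j)).
Proof.
split=> [[f [hf <-]] i j | hM]; first exact: IntKM_entries.
have [f phifM] := phi_surjective M.
by exists f; split=> //; apply: entries_IntKM; rewrite phifM.
Qed.
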